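(* Let $n,d$ be positive integers and $V=\mathbb{R}[\mathcal{V}_n]_{\le d}$. The multiplicity $m_{\bm{\lambda}}$ of $S_{\bm{\lambda}}$ in the decomposition of $V$ into irreducible $\mathfrak{S}_n$-modules (equivalently, the dimension of $W_{\tau_{\bm{\lambda}}}$ for any tableau $\tau_{\bm{\lambda}}$ of shape $\bm{\lambda}$) is zero unless $\bm{\lambda}\geq_{\textup{lex}}(n-2d,1^{2d})$; that is, \[ V=\bigoplus_{\bm{\lambda}\geq_{\textup{lex}}(n-2d,1^{2d})} V_{\bm{\lambda}}.\]
   Context: Let $\mathbb{R}[\mathsf{x}]$ be the polynomial ring in the $\binom n2$ variables $\mathsf{x}_{ij}$, $1\le i<j\le n$ (with $\mathsf{x}_{ji}:=\mathsf{x}_{ij}$). Let $\mathcal{V}_n=\{0,1\}^{\binom n2}$ and $\mathcal{I}_n$ the ideal generated by $\mathsf{x}_{ij}^2-\mathsf{x}_{ij}$, $1\le i<j\le n$. $\mathbb{R}[\mathcal{V}_n]=\mathbb{R}[\mathsf{x}]/\mathcal{I}_n$ is the ring of real functions on $\mathcal{V}_n$ (identified as a vector space with square-free polynomials), and $\mathbb{R}[\mathcal{V}_n]_{\le d}$ is the image of the polynomials of degree at most $d$ (the square-free polynomials of degree at most $d$). $\mathfrak{S}_n$ acts by $\mathfrak{s}\cdot\mathsf{x}_{ij}=\mathsf{x}_{\mathfrak{s}(i)\mathfrak{s}(j)}$, extended to ring automorphisms; this descends to $\mathbb{R}[\mathcal{V}_n]_{\le d}$. Irreducible $\mathfrak{S}_n$-modules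 are $S_{\bm{\lambda}}$, $\bm{\lambda}\vdash n$; the isotypic component $V_{\bm{\lambda}}$ of $V$ is the span of all submodules isomorphic to $S_{\bm{\lambda}}$. A tableau $\tau_{\bm{\lambda}}$ of shape $\bm{\lambda}$ is a bijective filling of the Young diagram of $\bm{\lambda}$ with $1,\dots,n$; its row group $\mathfrak{R}_{\tau_{\bm{\lambda}}}$ is the subgroup of $\mathfrak{S}_n$ preserving the set of labels in each row. $W_{\tau_{\bm{\lambda}}}:=V_{\bm{\lambda}}^{\mathfrak{R}_{\tau_{\bm{\lambda}}}}$ is the subspace of $V_{\bm{\lambda}}$ fixed by every element of the row group. $(n-2d,1^{2d})$ is the hook partition with first part $n-2d$ and $2d$ parts equal to $1$; $\geq_{\textup{lex}}$ is the lexicographic order on partitions. *)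

From HB Require Import structures.
From mathcomp Require Import all_boot all_order all_fingroup all_algebra.
From mathcomp Require Import reals.

Set Implicit Arguments.
Unset Strict Implicit.
Unset Printing Implicit Defensive.

Import GRing.Theory.
Local Open Scope ring_scope.

Definition is_partition (n : nat) (lam : seq nat) : bool :=
  [&& sorted geq lam, all (fun k => 0 < k)%N lam & sumn lam == n].

(* the hook partition (n - 2d, 1^{2d})  (first part truncated at 0) *)
Definition hook (n d : nat) : seq nat := (n - 2 * d)%N :: nseq (2 * d) 1%N.

Definition lex_ge (l m : seq nat) : Prop :=
  (forall j, nth 0%N l j = nth 0%N m j) \/
  exists i, (forall j, (j < i)%N -> nth 0%N l j = nth 0%N m j) /\
            (nth 0%N m i < nth 0%N l i)%N.

(* x_E = prod_{ij in E} x_ij, E a set of edges {i,j} (i <> j) of size <= d.   *)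

Definition is_sqfree_mon (n d : nat) (E : {set {set 'I_n}}) : bool :=
  [forall e in E, #|e| == 2%N] && (#|E| <= d)%N.

Definition sqfree_mon (n d : nat) := {E : {set {set 'I_n}} | is_sqfree_mon d E}.

Definition dimV (n d : nat) : nat := #|{: sqfree_mon n d}|.

(* s . x_E = x_{s(E)} ; the matrix (acting on row vectors) of s on V *)
Definition actE (n : nat) (s : {perm 'I_n}) (E : {set {set 'I_n}}) :
    {set {set 'I_n}} := [set [set s x | x in e] | e : {set 'I_n} in E].

Definition reprV (R : nzRingType) (n d : nat) (s : {perm 'I_n}) : 'M[R]_(dimV n d) :=
  \matrix_(i, j) (val (enum_val j) == actE s (val (enum_val i)))%:R.

(* a tableau of shape lam: label i sits in cell (row, column) = t i;
   t injective with image inside the Young diagram of lam (hence, as lam |- n,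
   a bijective filling of the diagram with the n labels). *)
Definition is_tableau (n : nat) (lam : seq nat)
    (t : {ffun 'I_n -> 'I_n * 'I_n}) : bool :=
  injectiveb t && [forall i, ((t i).2 < nth 0%N lam (t i).1)%N].

Definition row_group (n : nat) (t : {ffun 'I_n -> 'I_n * 'I_n}) : {set {perm 'I_n}} :=
  [set s : {perm 'I_n} | [forall i, (t (s i)).1 == (t i).1]].
Definition col_group (n : nat) (t : {ffun 'I_n -> 'I_n * 'I_n}) : {set {perm 'I_n}} :=
  [set s : {perm 'I_n} | [forall i, (t (s i)).2 == (t i).2]].

(* a tabloid of shape lam is recorded by the row of each label *)
Definition is_tabloid (n : nat) (lam : seq nat) (f : {ffun 'I_n -> 'I_n}) : bool :=
  [forall r : 'I_n, #|[set i | f i == r]| == nth 0%N lam r].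

Definition tabloid (n : nat) (lam : seq nat) :=
  {f : {ffun 'I_n -> 'I_n} | is_tabloid lam f}.

Definition dimM (n : nat) (lam : seq nat) : nat := #|{: tabloid n lam}|.

Definition tabloid_of (n : nat) (t : {ffun 'I_n -> 'I_n * 'I_n}) : {ffun 'I_n -> 'I_n} :=
  [ffun i => (t i).1].

(* s . t = t o s^-1 (label s i goes where i was) *)
Definition act_tab (n : nat) (s : {perm 'I_n}) (t : {ffun 'I_n -> 'I_n * 'I_n}) :
  {ffun 'I_n -> 'I_n * 'I_n} := [ffun k => t ((s^-1)%g k)].

Definition act_tabloid (n : nat) (s : {perm 'I_n}) (f : {ffun 'I_n -> 'I_n}) :
  {ffun 'I_n -> 'I_n} := [ffun k => f ((s^-1)%g k)].

Definition reprM (R : nzRingType) (n : nat) (lam : seq nat) (s : {perm 'I_n}) :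
    'M[R]_(dimM n lam) :=
  \matrix_(i, j) (val (enum_val j) == act_tabloid s (val (enum_val i)))%:R.

Definition polytabloid (R : nzRingType) (n : nat) (lam : seq nat)
    (t : {ffun 'I_n -> 'I_n * 'I_n}) : 'rV[R]_(dimM n lam) :=
  \row_j \sum_(p in col_group t)
     (-1) ^+ odd_perm p * (val (enum_val j) == tabloid_of (act_tab p t))%:R.

Definition specht (R : fieldType) (n : nat) (lam : seq nat) : 'M[R]_(dimM n lam) :=
  (\sum_(t | is_tableau lam t) <<polytabloid R lam t>>)%MS.

Definition is_submoduleV (R : fieldType) (n d : nat) (U : 'M[R]_(dimV n d)) : Prop :=
  forall s : {perm 'I_n}, (U *m reprV R d s <= U)%MS.

Definition iso_to_specht (R : fieldType) (n d : nat) (lam : seq nat)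
    (U : 'M[R]_(dimV n d)) : Prop :=
  exists f : 'M[R]_(dimM n lam, dimV n d),
    [/\ \rank (specht R n lam *m f) = \rank (specht R n lam),
        (specht R n lam *m f == U)%MS &
        forall s : {perm 'I_n},
          specht R n lam *m (reprM R lam s *m f) = specht R n lam *m (f *m reprV R d s)].

(* isotypic component V_lambda = span of all submodules isomorphic to S_lambda;
   it is zero iff every such submodule is zero, i.e. iff m_lambda = 0. *)
Definition multiplicity_zero (R : fieldType) (n d : nat) (lam : seq nat) : Prop :=
  forall U : 'M[R]_(dimV n d), @is_submoduleV R n d U -> @iso_to_specht R n d lam U -> \rank U = 0%N.

(* If lam is not lex-above the hook (n - 2d, 1^2d), its first row is shorter than
   n - 2d.  A monomial x_E of degree at most d involves at most 2d labels, so among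
   the at least n - 2d remaining labels two lie in the same column of any tableau t.
   Their transposition fixes x_E but negates the polytabloid e_t; hence for an
   S_n-map f the x_E-coefficient of f(e_t) equals its own negative and vanishes.
   So every S_n-map from the Specht module to V is zero. *)

From HB Require Import structures.
From mathcomp Require Import all_boot all_order all_fingroup all_algebra.
From mathcomp Require Import reals zify.

Set Implicit Arguments.
Unset Strict Implicit.
Unset Printing Implicit Defensive.

Import GRing.Theory Num.Theory.
Local Open Scope ring_scope.

Lemma sorted_geq_all_leq (x : nat) (s : seq nat) :
  sorted geq (x :: s) -> all (fun y => y <= x)%N s.
Proof.
move=> /= xs; have := order_path_min (leT := geq) _ xs.
by apply=> a b c ba cb; exact: leq_trans cb ba.
Qed.

Lemma hook_head_leq_partition (n d : nat) (lam : seq nat) :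
  (0 < n)%N -> (0 < d)%N -> is_partition n lam ->
  (n - 2 * d <= nth 0 lam 0)%N -> lex_ge lam (hook n d).
Proof.
move=> n_gt0 d_gt0 /and3P[lam_sorted lam_pos /eqP lam_sum].
case: lam lam_sorted lam_pos lam_sum => [|x s] //=; first lia.
move=> xs /andP[x_gt0 s_pos] sum_xs x_ge.
have [x_gt|x_lt|x_eq] := ltngtP (n - 2 * d) x.
- by right; exists 0%N; split=> // -[].
- by lia.
case: s xs s_pos sum_xs => [|y s] xs s_pos /= sum_xs; first lia.
have [y_gt1|y_le1] := ltnP 1 y.
  right; exists 1%N; split; first by case.
  by rewrite /hook; case: (2 * d)%N d_gt0 => /=; lia.
have ones : s = nseq (size s) 1%N.
  apply/all_pred1P/allP => z zs.
  have /allP/(_ z zs) := sorted_geq_all_leq (path_sorted xs).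
  by move: s_pos => /andP[_ /allP/(_ z zs)] /=; lia.
move: sum_xs; rewrite ones /= sumn_nseq => sum_xs.
have y1 : y = 1%N by move: s_pos => /andP[]; lia.
left; rewrite /hook -x_eq y1 /=.
by rewrite (_ : (2 * d)%N = (size s).+1) //; lia.
Qed.

Lemma tableau_col_lt_head (n : nat) (lam : seq nat) (t : {ffun 'I_n -> 'I_n * 'I_n}) i :
  sorted geq lam -> is_tableau lam t -> ((t i).2 < nth 0 lam 0)%N.
Proof.
move=> lam_sorted /andP[_ /forallP/(_ i) t_in].
have [row_lt|row_ge] := ltnP (t i).1 (size lam); last by rewrite nth_default in t_in.
apply: leq_trans t_in _; apply: (sorted_leq_nth (leT := geq)) => //.
- by move=> a b c ba cb; exact: leq_trans cb ba.
- exact: leqnn.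
- by rewrite inE; case: (size lam) row_lt.
Qed.

Lemma tableau_column_collision (n : nat) (lam : seq nat) (t : {ffun 'I_n -> 'I_n * 'I_n})
    (A : {set 'I_n}) :
  sorted geq lam -> is_tableau lam t -> (nth 0 lam 0 < #|A|)%N ->
  exists a b, [/\ a \in A, b \in A, a != b & (t a).2 = (t b).2].
Proof.
move=> lam_sorted t_tab A_big.
case: (boolP [exists a in A, exists b in A, (a != b) && ((t a).2 == (t b).2)]).
  by move=> /exists_inP[a aA /exists_inP[b bA /andP[ab /eqP tab]]]; exists a, b.
move=> /negP no_pair; exfalso; move: A_big; apply/negP; rewrite -leqNgt.
pose col (i : 'I_n) := nat_of_ord (t i).2.
have col_inj : {in A &, injective col}.
  move=> a b aA bA col_ab; apply/eqP/negPn/negP => ab; apply: no_pair.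
  apply/exists_inP; exists a => //; apply/exists_inP; exists b => //.
  by rewrite ab; apply/eqP/val_inj.
rewrite cardE -(size_map col) -[X in (_ <= X)%N](size_iota 0).
apply: uniq_leq_size.
  by rewrite map_inj_in_uniq ?enum_uniq // => a b; rewrite !mem_enum; exact: col_inj.
by move=> _ /mapP[i _ ->]; rewrite mem_iota; exact: tableau_col_lt_head.
Qed.

Definition edge_support (n : nat) (E : {set {set 'I_n}}) : {set 'I_n} := \bigcup_(e in E) e.

Lemma card_edge_support (n d : nat) (E : {set {set 'I_n}}) :
  is_sqfree_mon d E -> (#|edge_support E| <= 2 * d)%N.
Proof.
move=> /andP[/forall_inP E_edges E_le]; rewrite /edge_support.
apply: leq_trans (_ : \sum_(e in E) #|e| <= _)%N.
  elim/big_rec2: _ => [|e k A _ A_le]; first by rewrite cards0.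
  by apply: leq_trans (leq_card_setU e A).1 _; rewrite leq_add2l.
rewrite (eq_bigr (fun _ => 2%N)); last by move=> e /E_edges/eqP.
by rewrite sum_nat_const mulnC leq_mul2l E_le orbT.
Qed.

Lemma free_column_pair (n d : nat) (lam : seq nat) (t : {ffun 'I_n -> 'I_n * 'I_n})
    (E : {set {set 'I_n}}) :
  sorted geq lam -> is_tableau lam t -> is_sqfree_mon d E -> (nth 0 lam 0 < n - 2 * d)%N ->
  exists a b, [/\ a \notin edge_support E, b \notin edge_support E,
                  a != b & (t a).2 = (t b).2].
Proof.
move=> lam_sorted t_tab E_mon lam_lt.
have free_big : (nth 0 lam 0 < #|~: edge_support E|)%N.
  have := card_edge_support E_mon; have := cardsC (edge_support E).
  by rewrite card_ord; lia.
have [a [b [aF bF ab tab]]] := tableau_column_collision lam_sorted t_tab free_big.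
by exists a, b; rewrite -!in_setC.
Qed.

Lemma act_tabloid1 (n : nat) (f : {ffun 'I_n -> 'I_n}) : act_tabloid 1 f = f.
Proof. by apply/ffunP => k; rewrite ffunE invg1 perm1. Qed.

Lemma act_tabloidM (n : nat) (s r : {perm 'I_n}) (f : {ffun 'I_n -> 'I_n}) :
  act_tabloid (s * r) f = act_tabloid r (act_tabloid s f).
Proof. by apply/ffunP => k; rewrite !ffunE invMg permM. Qed.

Lemma act_tabloidKV (n : nat) (s : {perm 'I_n}) : cancel (act_tabloid s^-1) (act_tabloid s).
Proof. by move=> f; rewrite -act_tabloidM mulVg act_tabloid1. Qed.

Lemma act_tabloidK (n : nat) (s : {perm 'I_n}) : cancel (act_tabloid s) (act_tabloid s^-1).
Proof. by move=> f; rewrite -act_tabloidM mulgV act_tabloid1. Qed.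

Lemma act_tabloid_of (n : nat) (s p : {perm 'I_n}) (t : {ffun 'I_n -> 'I_n * 'I_n}) :
  act_tabloid s (tabloid_of (act_tab p t)) = tabloid_of (act_tab (p * s) t).
Proof. by apply/ffunP => k; rewrite !ffunE invMg permM. Qed.

Lemma is_tabloid_act (n : nat) (lam : seq nat) (s : {perm 'I_n}) (f : {ffun 'I_n -> 'I_n}) :
  is_tabloid lam f -> is_tabloid lam (act_tabloid s f).
Proof.
move=> /forallP f_tab; apply/forallP => r; rewrite -(eqP (f_tab r)).
have -> : [set i | act_tabloid s f i == r] = s @: [set i | f i == r].
  apply/setP => k; rewrite inE ffunE -{2}(permKV s k) mem_imset ?inE //.
  exact: perm_inj.
by rewrite card_imset //; exact: perm_inj.
Qed.

Lemma actEM (n : nat) (s r : {perm 'I_n}) (E : {set {set 'I_n}}) :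
  actE (s * r) E = actE r (actE s E).
Proof.
rewrite /actE -imset_comp; apply: eq_imset => e /=.
by rewrite -imset_comp; apply: eq_imset => x; rewrite permM.
Qed.

Lemma actE1 (n : nat) (E : {set {set 'I_n}}) : actE 1 E = E.
Proof.
rewrite /actE -[RHS]imset_id; apply: eq_imset => e.
by rewrite -[RHS]imset_id; apply: eq_imset => x; rewrite perm1.
Qed.

Lemma actEK (n : nat) (s : {perm 'I_n}) : cancel (actE s) (actE s^-1).
Proof. by move=> E; rewrite -actEM mulgV actE1. Qed.

Lemma actE_tperm_free (n : nat) (a b : 'I_n) (E : {set {set 'I_n}}) :
  a \notin edge_support E -> b \notin edge_support E -> actE (tperm a b) E = E.
Proof.
move=> aF bF; rewrite /actE -[RHS]imset_id; apply: eq_in_imset => e eE /=.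
rewrite -[RHS]imset_id; apply: eq_in_imset => x xe /=.
have x_supp : x \in edge_support E by apply/bigcupP; exists e.
by rewrite tpermD //; [apply: contraNneq aF | apply: contraNneq bF] => ->.
Qed.

Section PermutationMatrices.

Variable R : nzRingType.

Lemma mul_reprM_entry (n : nat) (lam : seq nat) (v : 'rV[R]_(dimM n lam)) s i j :
  val (enum_val i) = act_tabloid s^-1 (val (enum_val j)) ->
  (v *m reprM R lam s) 0 j = v 0 i.
Proof.
move=> ij; rewrite mxE (bigD1 i) //= mxE ij act_tabloidKV eqxx mulr1 big1 ?addr0 //.
move=> k /eqP ki; rewrite mxE; case: eqP => [jk|]; last by rewrite mulr0.
by case: ki; apply/enum_val_inj/val_inj; rewrite ij jk act_tabloidK.
Qed.

Lemma mul_reprV_entry (n d : nat) (v : 'rV[R]_(dimV n d)) s i j :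
  actE s (val (enum_val i)) = val (enum_val j) ->
  (v *m reprV R d s) 0 j = v 0 i.
Proof.
move=> ij; rewrite mxE (bigD1 i) //= mxE ij eqxx mulr1 big1 ?addr0 //.
move=> k /eqP ki; rewrite mxE; case: eqP => [jk|]; last by rewrite mulr0.
by case: ki; apply/enum_val_inj/val_inj; rewrite -(actEK s (val (enum_val k))) -jk -ij actEK.
Qed.

Lemma polytabloid_col_tperm (n : nat) (lam : seq nat) (t : {ffun 'I_n -> 'I_n * 'I_n})
    (a b : 'I_n) :
  a != b -> (t a).2 = (t b).2 ->
  polytabloid R lam t *m reprM R lam (tperm a b) = - polytabloid R lam t.
Proof.
move=> ab col_ab; set tau := tperm a b.
have col_tau x : (t (tau x)).2 = (t x).2.
  by rewrite /tau; case: tpermP => [->|->|] //; rewrite col_ab.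
apply/rowP => j; set F := val (enum_val j).
have F_tau : is_tabloid lam (act_tabloid tau^-1 F) by apply/is_tabloid_act/valP.
pose i := enum_rank (Sub _ F_tau : tabloid n lam).
rewrite (@mul_reprM_entry _ _ _ _ i) ?enum_rankK // !mxE -sumrN.
rewrite (reindex_inj (mulIg tau)) /=; apply: eq_big => [p|p _].
  by rewrite !inE; apply: eq_forallb => x; rewrite permM col_tau.
rewrite odd_permM signr_addb odd_tperm ab expr1 mulrN1 mulNr -act_tabloid_of.
by rewrite enum_rankK /= /tau tpermV (inj_eq (can_inj (act_tabloidK _))).
Qed.

End PermutationMatrices.

Lemma polytabloid_intertwined_eq0 (R : numFieldType) (n d : nat) (lam : seq nat)
    (t : {ffun 'I_n -> 'I_n * 'I_n}) (f : 'M[R]_(dimM n lam, dimV n d)) :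
  sorted geq lam -> is_tableau lam t -> (nth 0 lam 0 < n - 2 * d)%N ->
  (forall s, polytabloid R lam t *m reprM R lam s *m f =
             polytabloid R lam t *m f *m reprV R d s) ->
  polytabloid R lam t *m f = 0.
Proof.
move=> lam_sorted t_tab lam_lt f_equiv; apply/rowP => j; rewrite [RHS]mxE.
have [a [b [aF bF ab col_ab]]] :=
  free_column_pair lam_sorted t_tab (valP (enum_val j)) lam_lt.
have := @mul_reprV_entry R n d (polytabloid R lam t *m f) (tperm a b) j j.
rewrite actE_tperm_free // -f_equiv polytabloid_col_tperm // mulNmx mxE => /(_ erefl).
set x := _ 0 j => x_opp; apply/eqP.
by rewrite -[x == 0]/(false || (x == 0)) -(mulrn_eq0 x 2) mulr2n -{1}x_opp addNr.
Qed.

Lemma specht_intertwined_eq0 (R : numFieldType) (n d : nat) (lam : seq nat)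
    (f : 'M[R]_(dimM n lam, dimV n d)) :
  sorted geq lam -> (nth 0 lam 0 < n - 2 * d)%N ->
  (forall s, specht R n lam *m (reprM R lam s *m f) = specht R n lam *m (f *m reprV R d s)) ->
  specht R n lam *m f = 0.
Proof.
move=> lam_sorted lam_lt f_equiv; apply/eqP; rewrite -sub_kermx.
apply/sumsmx_subP => t t_tab; rewrite genmxE sub_kermx.
apply/eqP/polytabloid_intertwined_eq0 => // s.
have /submxP[c ->] : (polytabloid R lam t <= specht R n lam)%MS.
  by apply: (sumsmx_sup t) => //; rewrite genmxE.
by rewrite -!mulmxA f_equiv.
Qed.

Theorem corollary2p5 (R : realType) (n d : nat) :
  (0 < n)%N -> (0 < d)%N ->
  forall lam : seq nat, is_partition n lam ->
  ~ lex_ge lam (hook n d) ->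
  multiplicity_zero R n d lam.
Proof.
move=> n_gt0 d_gt0 lam lam_part not_lex U _ [f [_ f_im f_equiv]].
have lam_lt : (nth 0 lam 0 < n - 2 * d)%N.
  by rewrite ltnNge; apply/negP => /(hook_head_leq_partition n_gt0 d_gt0 lam_part).
have lam_sorted : sorted geq lam by case/and3P: lam_part.
by rewrite -(eqmx_rank f_im) specht_intertwined_eq0 ?mxrank0.
Qed.
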